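(* Given two trees $T$ and $T'$, there exists a tree $T''$ whose subdivision is a refinement of the subdivisions of both $T$ and $T'$ (every endpoint of a leaf interval of $T$ or of $T'$ is an endpoint of a leaf interval of $T''$).
   Context: Let $\tau=(\sqrt5-1)/2$, so $\tau^2+\tau=1$. A tree is a finite rooted binary tree whose carets (non-leaf vertex with its two children) are each labelled $x$-type or $y$-type. Vertices correspond to subintervals of $[0,1]$: the root to $[0,1]$; if a vertex corresponds to $[p,p+\tau^k]$, an $x$-type caret there gives children $[p,p+\tau^{k+2}]$ (left) and $[p+\tau^{k+2},p+\tau^k]$ (right), and a $y$-type caret gives $[p,p+\tau^{k+1}]$ (left) and $[p+\tau^{k+1},p+\tau^k]$ (right). The subdivision of a tree is the decomposition of $[0,1]$ into the intervals of its leaves. *)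

From Stdlib Require Import Reals List.
Open Scope R_scope.

(* tau = (sqrt 5 - 1)/2, so tau^2 + tau = 1 *)
Definition tau : R := (sqrt 5 - 1) / 2.

Inductive tree : Type :=
| Leaf : tree
| NodeX : tree -> tree -> tree
| NodeY : tree -> tree -> tree.

(* An interval [p, p + tau^k] is encoded by the pair (p, k). *)
Definition interval := (R * nat)%type.

Fixpoint leaf_intervals (t : tree) (p : R) (k : nat) : list interval :=
  match t with
  | Leaf => (p, k) :: nil
  | NodeX l r =>
      (* children [p, p+tau^(k+2)] and [p+tau^(k+2), p+tau^k] (length tau^(k+1)) *)
      leaf_intervals l p (k + 2) ++ leaf_intervals r (p + tau ^ (k + 2)) (k + 1)
  | NodeY l r =>
      (* children [p, p+tau^(k+1)] and [p+tau^(k+1), p+tau^k] (length tau^(k+2)) *)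
      leaf_intervals l p (k + 1) ++ leaf_intervals r (p + tau ^ (k + 1)) (k + 2)
  end.

Definition subdivision (t : tree) : list interval := leaf_intervals t 0 0.

Definition is_endpoint (t : tree) (x : R) : Prop :=
  exists p k, In (p, k) (subdivision t) /\ (x = p \/ x = p + tau ^ k).

Definition refines (t'' t : tree) : Prop :=
  forall x, is_endpoint t x -> is_endpoint t'' x.

(* Both caret types cut [p, p + tau^k] into pieces of lengths tau^(k+2) and
   tau^(k+1), in opposite orders.  Hence a y-caret whose left child carries a
   y-caret and an x-caret whose right child carries an x-caret cut the interval
   at the same two points p + tau^(k+2) and p + tau^(k+1) into the same three
   pieces.  Using this rotation, every tree is refined by a tree whose root
   caret has any prescribed type; a common refinement of T and T' is then built
   recursively, giving T' the root type of T and refining child by child. *)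
From Stdlib Require Import Reals List Lra Lia.
Open Scope R_scope.

Lemma tau_sq_add_tau : tau ^ 2 + tau = 1.
Proof.
  unfold tau.
  assert (sqrt5_sq : sqrt 5 * sqrt 5 = 5) by (apply sqrt_sqrt; lra).
  simpl; nra.
Qed.

Lemma tau_pow_split k : tau ^ (k + 2) + tau ^ (k + 1) = tau ^ k.
Proof.
  rewrite !pow_add, <- Rmult_plus_distr_l.
  pose proof tau_sq_add_tau; simpl in *.
  replace (tau * (tau * 1) + tau * 1) with 1 by lra.
  ring.
Qed.

Definition endpoint_of (l : list interval) (x : R) : Prop :=
  exists q j, In (q, j) l /\ (x = q \/ x = q + tau ^ j).

Lemma endpoint_of_app l1 l2 x :
  endpoint_of (l1 ++ l2) x <-> endpoint_of l1 x \/ endpoint_of l2 x.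
Proof.
  split.
  - intros (q & j & Hin & Hx). apply in_app_or in Hin.
    destruct Hin; [left | right]; exists q, j; auto.
  - intros [(q & j & Hin & Hx) | (q & j & Hin & Hx)];
      exists q, j; split; auto; apply in_or_app; auto.
Qed.

(* Refinement relative to an arbitrary root interval [p, p + tau^k], so that it
   can be checked child by child. *)
Definition finer (u t : tree) : Prop :=
  forall p k x,
    endpoint_of (leaf_intervals t p k) x -> endpoint_of (leaf_intervals u p k) x.

Lemma finer_refl t : finer t t.
Proof. intros p k x H; exact H. Qed.

Lemma finer_trans u v t : finer u v -> finer v t -> finer u t.
Proof. intros Huv Hvt p k x H; apply Huv, Hvt, H. Qed.

Lemma finer_of_leaf_intervals_eq u t :
  (forall p k, leaf_intervals u p k = leaf_intervals t p k) -> finer u t.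
Proof. intros Heq p k x; rewrite Heq; trivial. Qed.

Lemma finer_NodeX a b l r : finer a l -> finer b r -> finer (NodeX a b) (NodeX l r).
Proof.
  intros Hal Hbr p k x; simpl; rewrite !endpoint_of_app.
  intros [H | H]; [left; apply Hal | right; apply Hbr]; exact H.
Qed.

Lemma finer_NodeY a b l r : finer a l -> finer b r -> finer (NodeY a b) (NodeY l r).
Proof.
  intros Hal Hbr p k x; simpl; rewrite !endpoint_of_app.
  intros [H | H]; [left; apply Hal | right; apply Hbr]; exact H.
Qed.

Lemma endpoint_of_leaf_intervals_bounds t p k :
  endpoint_of (leaf_intervals t p k) p /\
  endpoint_of (leaf_intervals t p k) (p + tau ^ k).
Proof.
  revert p k.
  induction t as [| l IHl r IHr | l IHl r IHr]; intros p k.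
  - split; exists p, k; simpl; auto.
  - simpl; rewrite !endpoint_of_app; split.
    + left; apply IHl.
    + right; rewrite <- (tau_pow_split k), <- Rplus_assoc; apply IHr.
  - simpl; rewrite !endpoint_of_app; split.
    + left; apply IHl.
    + right; rewrite <- (tau_pow_split k), (Rplus_comm (tau ^ (k + 2))),
        <- Rplus_assoc; apply IHr.
Qed.

Lemma finer_Leaf u : finer u Leaf.
Proof.
  intros p k x (q & j & [Hqj | []] & Hx).
  injection Hqj as <- <-.
  destruct Hx as [-> | ->]; apply endpoint_of_leaf_intervals_bounds.
Qed.

Lemma leaf_intervals_rotate A B C p k :
  leaf_intervals (NodeY (NodeY A B) C) p k = leaf_intervals (NodeX A (NodeX B C)) p k.
Proof.
  simpl; rewrite <- app_assoc.
  replace (k + 1 + 1)%nat with (k + 2)%nat by lia.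
  replace (k + 1 + 2)%nat with (k + 2 + 1)%nat by lia.
  replace (p + tau ^ (k + 2) + tau ^ (k + 2 + 1)) with (p + tau ^ (k + 1));
    [reflexivity |].
  pose proof (tau_pow_split (k + 1)) as Hsplit.
  replace (k + 1 + 2)%nat with (k + 2 + 1)%nat in Hsplit by lia.
  replace (k + 1 + 1)%nat with (k + 2)%nat in Hsplit by lia.
  lra.
Qed.

Lemma finer_root_shapes t :
  (exists A B, finer (NodeX A B) t) /\ (exists A B, finer (NodeY A B) t).
Proof.
  induction t as [| l IHl r IHr | l IHl r IHr].
  - split; exists Leaf, Leaf; apply finer_Leaf.
  - split; [exists l, r; apply finer_refl |].
    destruct IHr as [(B & C & HBC) _].
    exists (NodeY l B), C.
    apply finer_trans with (NodeX l (NodeX B C)).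
    + apply finer_of_leaf_intervals_eq, leaf_intervals_rotate.
    + apply finer_NodeX; [apply finer_refl | exact HBC].
  - split; [| exists l, r; apply finer_refl].
    destruct IHl as [_ (A & B & HAB)].
    exists A, (NodeX B r).
    apply finer_trans with (NodeY (NodeY A B) r).
    + apply finer_of_leaf_intervals_eq; intros p k.
      symmetry; apply leaf_intervals_rotate.
    + apply finer_NodeY; [exact HAB | apply finer_refl].
Qed.

Lemma finer_common t s : exists u, finer u t /\ finer u s.
Proof.
  revert s.
  induction t as [| l IHl r IHr | l IHl r IHr]; intros s.
  - exists s; split; [apply finer_Leaf | apply finer_refl].
  - destruct (finer_root_shapes s) as [(A & B & HAB) _].
    destruct (IHl A) as (a & Hal & HaA), (IHr B) as (b & Hbr & HbB).
    exists (NodeX a b); split; [apply finer_NodeX; assumption |].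
    apply finer_trans with (NodeX A B); [apply finer_NodeX |]; assumption.
  - destruct (finer_root_shapes s) as [_ (A & B & HAB)].
    destruct (IHl A) as (a & Hal & HaA), (IHr B) as (b & Hbr & HbB).
    exists (NodeY a b); split; [apply finer_NodeY; assumption |].
    apply finer_trans with (NodeY A B); [apply finer_NodeY |]; assumption.
Qed.

Theorem mainTheorem11 :
  forall T T' : tree, exists T'' : tree, refines T'' T /\ refines T'' T'.
Proof.
  intros T T'.
  destruct (finer_common T T') as (T'' & HT & HT').
  exists T''; split; intro x; [apply (HT 0 0%nat x) | apply (HT' 0 0%nat x)].
Qed.
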